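(* Let $\varphi(x)=a_nx^n+\cdots+a_1x+a_0\in\mathbb{C}[x]$ with $a_n\neq0$ have $n$ distinct roots $x_1,\dots,x_n$, and let $h(x)\in R$. Let $h_*(x)=c_{n-1}x^{n-1}+\cdots+c_1x+c_0$ be the unique polynomial of degree less than $n$ in the coset $\overline{h(x)}\in R/(\varphi(x))$, and let $r(x)=b_{n-1}x^{n-1}+\cdots+b_1x+b_0$ be the unique polynomial of degree less than $n$ in the coset $\overline{\varphi'(x)h(x)}\in R/(\varphi(x))$. Define numbers $b_{j,k}$ ($j=-1,0,\dots,n-1$, $k=0,\dots,n-1$) by $b_{-1,k}=0$, $$b_{n-i,0}=(n-(i-1))\,a_{n-(i-1)},\qquad i=1,\dots,n,$$ $$b_{n-i,k}=-\frac{a_{n-i}}{a_n}\,b_{n-1,k-1}+b_{n-(i+1),k-1},\qquad i=1,\dots,n,\ k=1,\dots,n-1.$$ Then $$b_{n-i}=c_{n-1}b_{n-i,n-1}+\cdots+c_1b_{n-i,1}+c_0b_{n-i,0},\qquad i=1,\dots,n.$$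
   Context: $R\subset\mathbb{C}(x)$ denotes the subring of rational functions $p(x)/q(x)$ with $p,q\in\mathbb{C}[x]$ and $q(x_i)\neq0$ for every root $x_i$ of $\varphi$. $(\varphi(x))$ is the ideal of $R$ generated by $\varphi$, and cosets in $R/(\varphi(x))$ are denoted by an overbar. Every coset of $R/(\varphi(x))$ contains a unique polynomial of degree less than $n$, and members of the same coset take the same values at the roots of $\varphi$. *)

From mathcomp Require Import all_boot all_order all_algebra.
Set Implicit Arguments. Unset Strict Implicit. Unset Printing Implicit Defensive.
Import GRing.Theory.
Local Open Scope ring_scope.

(* A rational function p/q lies in R iff q does not vanish at any root of phi. *)
Definition nonvan {F : fieldType} (phi q : {poly F}) : Prop :=
  forall x, root phi x -> q.[x] != 0.

(* For h = p/q in R (q nonvanishing at the roots of phi) and a polynomial s,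
   [congR phi p q s] says that s lies in the coset of h in R/(phi), i.e.
   p/q - s = phi * (u/v) for some u/v in R, written without division:
   p * v = q * (s * v + phi * u). *)
Definition congR {F : fieldType} (phi p q s : {poly F}) : Prop :=
  exists u v : {poly F}, nonvan phi v /\ p * v = q * (s * v + phi * u).

(* The numbers b_{j,k} for j = 0..n-1 (b_{-1,k} = 0 is handled by the
   [if] below); here a_j = phi`_j.
   b_{j,0}   = (j+1) a_{j+1}                      (i.e. j = n - i)
   b_{j,k+1} = - (a_j / a_n) b_{n-1,k} + b_{j-1,k}  with b_{-1,k} = 0. *)
Fixpoint bcoef {F : fieldType} (phi : {poly F}) (n : nat) (k j : nat) : F :=
  match k with
  | 0 => (j.+1)%:R * phi`_j.+1
  | k'.+1 => - (phi`_j / phi`_n) * bcoef phi n k' n.-1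
             + (if j is j'.+1 then bcoef phi n k' j' else 0)
  end.

(* Reduction modulo phi is linear, so
   r = (phi' h) mod phi = sum_k c_k (X^k phi' mod phi), and the b_{j,k} are
   exactly the coefficients of X^k phi' mod phi: multiplying a remainder w by X
   and reducing again subtracts (w_{n-1} / a_n) phi, which is the recursion
   defining b_{j,k}.  That r is this remainder follows by evaluating at the n
   distinct roots of phi, where every element of R/(phi) is determined by its
   values. *)

From mathcomp Require Import all_boot all_order all_algebra.
From mathcomp Require Import ring.
Set Implicit Arguments. Unset Strict Implicit. Unset Printing Implicit Defensive.
Import GRing.Theory.
Local Open Scope ring_scope.

Lemma poly_eq0_roots (F : idomainType) (g : {poly F}) (xs : seq F) :
  (size g <= size xs)%N -> uniq xs -> all (root g) xs -> g = 0.
Proof.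
move=> sg uxs rxs; apply/eqP; apply: contraT => g_neq0.
by have := leq_trans (max_poly_roots g_neq0 rxs uxs) sg; rewrite ltnn.
Qed.

Lemma modp_mul_sum_coef (F : fieldType) (n : nat) (d g h : {poly F}) :
  (size h <= n)%N -> (g * h) %% d = \sum_(k < n) h`_k *: (('X^k * g) %% d).
Proof.
move=> sh; rewrite -{1}(take_poly_id sh) /take_poly poly_def mulr_sumr.
rewrite (big_morph (fun t => t %% d) (modpD d) (mod0p d)).
by apply: eq_bigr => k _; rewrite -scalerAr modpZl mulrC.
Qed.

Section ReductionModPhi.

Variables (F : fieldType) (n : nat) (phi : {poly F}).
Hypothesis size_phi : size phi = n.+1.

Lemma phi_neq0 : phi != 0.
Proof. by rewrite -size_poly_eq0 size_phi. Qed.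

Lemma coef_top_neq0 : phi`_n != 0.
Proof.
by have := phi_neq0; rewrite -lead_coef_eq0 lead_coefE size_phi.
Qed.

Lemma size_modp_le (t : {poly F}) : (size (t %% phi)%R <= n)%N.
Proof. by rewrite -ltnS -size_phi ltn_modp phi_neq0. Qed.

Lemma modp_mulX (w : {poly F}) : (0 < n)%N -> (size w <= n)%N ->
  ('X * w) %% phi = 'X * w - (w`_n.-1 / phi`_n) *: phi.
Proof.
move=> n_gt0 sw.
rewrite -{1}(subrK ((w`_n.-1 / phi`_n) *: phi) ('X * w)) addrC.
rewrite -mul_polyC modp_addl_mul_small // mul_polyC size_phi ltnS.
apply/leq_sizeP => j le_nj; rewrite coefB coefZ coefXM.
case: (ltngtP n j) le_nj => // [lt_nj | <-] _.
  have -> : phi`_j = 0 by apply/(leq_sizeP _ n.+1) => //; rewrite size_phi.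
  case: j lt_nj => //= j lt_nj.
  by rewrite mulr0 subr0; apply/(leq_sizeP _ n).
by rewrite eqn0Ngt n_gt0 mulfVK ?coef_top_neq0 // subrr.
Qed.

Lemma coef_modp_Xn_deriv (k j : nat) : (j < n)%N ->
  (('X^k * phi^`()) %% phi)`_j = bcoef phi n k j.
Proof.
elim: k j => [|k IHk] j lt_jn.
  rewrite expr0 mul1r modp_small; last first.
    by apply: leq_trans (lt_size_deriv phi_neq0) _; rewrite size_phi.
  by rewrite coef_deriv /= mulr_natl.
have n_gt0 : (0 < n)%N by apply: leq_ltn_trans lt_jn.
have lt_pred_n : (n.-1 < n)%N by rewrite prednK.
rewrite exprS -mulrA -modp_mul modp_mulX ?size_modp_le //.
rewrite coefB coefZ coefXM /= (IHk _ lt_pred_n).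
by case: j lt_jn => [|j] lt_jn /=; rewrite ?(IHk _ (ltnW lt_jn)); ring.
Qed.

Lemma congR_horner (p q s : {poly F}) (x : F) :
  congR phi p q s -> root phi x -> p.[x] = q.[x] * s.[x].
Proof.
move=> [u [v [v_nonvan e]]] rx.
have phix0 : phi.[x] = 0 by apply/eqP.
have := congr1 (horner^~ x) e; rewrite /= !hornerE phix0 mul0r addr0 mulrA.
exact: (mulIf (v_nonvan x rx)).
Qed.

Lemma congR_deriv_modp (xs : seq F) (p q hs r : {poly F}) :
  uniq xs -> size xs = n -> all (root phi) xs -> nonvan phi q ->
  congR phi p q hs -> (size r <= n)%N -> congR phi (phi^`() * p) q r ->
  r = (phi^`() * hs) %% phi.
Proof.
move=> uxs sxs rxs q_nonvan hs_cong sr r_cong.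
apply/eqP; rewrite -subr_eq0; apply/eqP.
apply: (poly_eq0_roots _ uxs).
  by rewrite sxs (leq_trans (size_polyD _ _)) // geq_max sr size_polyN size_modp_le.
apply/allP => x /(allP rxs) rx.
rewrite /root hornerD hornerN horner_mod // hornerM subr_eq0; apply/eqP.
apply: (mulfI (q_nonvan x rx)).
by rewrite -(congR_horner r_cong rx) hornerM (congR_horner hs_cong rx) mulrCA.
Qed.

End ReductionModPhi.

Theorem proposition1 (F : fieldType) (n : nat) (phi : {poly F}) (xs : seq F)
    (p q hs r : {poly F}) :
  size phi = n.+1 ->
  uniq xs -> size xs = n -> all (root phi) xs ->
  nonvan phi q ->
  (size hs <= n)%N -> congR phi p q hs ->
  (size r <= n)%N -> congR phi (phi^`() * p) q r ->
  forall i : nat, (1 <= i <= n)%N ->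
    r`_(n - i) = \sum_(k < n) hs`_k * bcoef phi n k (n - i).
Proof.
move=> size_phi uxs sxs rxs q_nonvan shs hs_cong sr r_cong i /andP[i_gt0 le_in].
rewrite (congR_deriv_modp size_phi uxs sxs rxs q_nonvan hs_cong sr r_cong).
rewrite (modp_mul_sum_coef _ _ shs) coef_sum; apply: eq_bigr => k _.
rewrite coefZ (coef_modp_Xn_deriv size_phi) //.
by rewrite ltn_subrL i_gt0 (leq_trans i_gt0 le_in).
Qed.
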